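(* Consider the single-node stochastic clearing problem described in the context, with positive incremental bid prices. Let $(d_j^*,g_i^*,D_j^*(\cdot),G_i^*(\cdot))$ be an optimal solution with associated prices $(\pi^*,\Pi^*(\cdot))$. Then the expected uplift payments are zero: $\mathcal{M}_i^U=0$ for all $i\in\mathcal{G}$ and $\mathcal{M}_j^U=0$ for all $j\in\mathcal{D}$.
   Context: Finite nonempty sets of suppliers $\mathcal{G}$ and consumers $\mathcal{D}$; a finite scenario set $\Omega$ with probabilities $p(\omega)>0$, $\sum_\omega p(\omega)=1$, $\mathbb{E}[Y(\omega)]=\sum_\omega p(\omega)Y(\omega)$. Data: bid prices $\alpha_i^g,\alpha_j^d\ge 0$, incremental bid prices $\Delta\alpha_i^{g,\pm},\Delta\alpha_j^{d,\pm}$, real-time capacities $\bar G_i(\omega),\bar D_j(\omega)\ge 0$. $(x)_+=\max\{x,0\}$, $(x)_-=\max\{-x,0\}$. Cost functions: $C_i^g(\omega)=\alpha_i^gG_i(\omega)+\Delta\alpha_i^{g,+}(G_i(\omega)-g_i)_++\Delta\alpha_i^{g,-}(G_i(\omega)-g_i)_-$ and $C_j^d(\omega)=-\alpha_j^dD_j(\omega)+\Delta\alpha_j^{d,+}(D_j(\omega)-d_j)_-+\Delta\alpha_j^{d,-}(D_j(\omega)-d_j)_+$. The single-node problem: minimize $\sum_i\mathbb{E}[C_i^g(\omega)]+\sum_j\mathbb{E}[C_j^d(\omega)]$ over free $g_i,d_j\in\mathbb{R}$ and real-time $G_i(\omega),D_j(\omega)$ subject to $\sum_i g_i=\sum_j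 d_j$ (multiplier $\pi$), $\sum_i(G_i(\omega)-g_i)=\sum_j(D_j(\omega)-d_j)$ for each $\omega$ (multiplier $p(\omega)\Pi(\omega)$), $0\le G_i(\omega)\le\bar G_i(\omega)$, $0\le D_j(\omega)\le\bar D_j(\omega)$. ''Optimal solution with associated prices $(\pi^*,\Pi^* )$'' means the solution minimizes the partial Lagrange function $\text{objective}-\pi^*(\sum_ig_i-\sum_jd_j)-\mathbb{E}[\Pi^*(\omega)(\sum_i(G_i(\omega)-g_i)-\sum_j(D_j(\omega)-d_j))]$ over all free $g_i,d_j$ and all $G_i(\cdot),D_j(\cdot)$ satisfying the bound constraints. Payments (evaluated at the solution and prices): $P_i^g(\omega)=g_i\pi+(G_i(\omega)-g_i)\Pi(\omega)$, $P_j^d(\omega)=-d_j\pi-(D_j(\omega)-d_j)\Pi(\omega)$. Expected uplifts: $\mathcal{M}_i^U:=-\min\{\mathbb{E}[P_i^g(\omega)]-\mathbb{E}[C_i^g(\omega)],0\}$ and $\mathcal{M}_j^U:=-\min\{\mathbb{E}[P_j^d(\omega)]-\mathbb{E}[C_j^d(\omega)],0\}$. *)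

From HB Require Import structures.
From mathcomp Require Import all_boot all_order all_algebra.
Set Implicit Arguments. Unset Strict Implicit. Unset Printing Implicit Defensive.
Import Order.TTheory GRing.Theory Num.Theory.
Local Open Scope ring_scope.

Section Market.
Variable R : realFieldType.

Definition posp (x : R) : R := Num.max x 0.
Definition negp (x : R) : R := Num.max (- x) 0.

Definition expect (Om : finType) (p : Om -> R) (Y : Om -> R) : R :=
  \sum_(w : Om) p w * Y w.

Record market (Gs Ds Om : finType) := Market {
  prob : Om -> R;
  alpha_g : Gs -> R;
  alpha_d : Ds -> R;
  dalpha_gp : Gs -> R;
  dalpha_gm : Gs -> R;
  dalpha_dp : Ds -> R;
  dalpha_dm : Ds -> R;
  Gbar : Gs -> Om -> R;
  Dbar : Ds -> Om -> R
}.

Variables (Gs Ds Om : finType) (M : market Gs Ds Om).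

Definition cost_g (i : Gs) (gi : R) (Gi : Om -> R) (w : Om) : R :=
  alpha_g M i * Gi w + dalpha_gp M i * posp (Gi w - gi)
  + dalpha_gm M i * negp (Gi w - gi).

Definition cost_d (j : Ds) (dj : R) (Dj : Om -> R) (w : Om) : R :=
  - (alpha_d M j * Dj w) + dalpha_dp M j * negp (Dj w - dj)
  + dalpha_dm M j * posp (Dj w - dj).

Definition objective (g : Gs -> R) (d : Ds -> R)
    (G : Gs -> Om -> R) (D : Ds -> Om -> R) : R :=
  \sum_(i : Gs) expect (prob M) (cost_g i (g i) (G i))
  + \sum_(j : Ds) expect (prob M) (cost_d j (d j) (D j)).

Definition bounds_ok (G : Gs -> Om -> R) (D : Ds -> Om -> R) : Prop :=
  (forall i w, 0 <= G i w <= Gbar M i w) /\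
  (forall j w, 0 <= D j w <= Dbar M j w).

Definition feasible (g : Gs -> R) (d : Ds -> R)
    (G : Gs -> Om -> R) (D : Ds -> Om -> R) : Prop :=
  \sum_(i : Gs) g i = \sum_(j : Ds) d j /\
  (forall w, \sum_(i : Gs) (G i w - g i) = \sum_(j : Ds) (D j w - d j)) /\
  bounds_ok G D.

Definition lagrangian (pi : R) (Pi : Om -> R) (g : Gs -> R) (d : Ds -> R)
    (G : Gs -> Om -> R) (D : Ds -> Om -> R) : R :=
  objective g d G D
  - pi * (\sum_(i : Gs) g i - \sum_(j : Ds) d j)
  - expect (prob M) (fun w => Pi w *
      (\sum_(i : Gs) (G i w - g i) - \sum_(j : Ds) (D j w - d j))).

(* optimal solution (feasible, minimizes the objective over feasible points)
   with associated prices (pi, Pi): it minimizes the partial Lagrangian over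
   all free g, d and all G, D satisfying the bound constraints. *)
Definition optimal_with_prices (g : Gs -> R) (d : Ds -> R)
    (G : Gs -> Om -> R) (D : Ds -> Om -> R) (pi : R) (Pi : Om -> R) : Prop :=
  feasible g d G D /\
  (forall g' d' G' D', feasible g' d' G' D' ->
      objective g d G D <= objective g' d' G' D') /\
  (forall g' d' G' D', bounds_ok G' D' ->
      lagrangian pi Pi g d G D <= lagrangian pi Pi g' d' G' D').

Definition pay_g (pi : R) (Pi : Om -> R) (gi : R) (Gi : Om -> R) (w : Om) : R :=
  gi * pi + (Gi w - gi) * Pi w.
Definition pay_d (pi : R) (Pi : Om -> R) (dj : R) (Dj : Om -> R) (w : Om) : R :=
  - (dj * pi) - (Dj w - dj) * Pi w.

Definition uplift_g (pi : R) (Pi : Om -> R) (i : Gs) (gi : R) (Gi : Om -> R) : R :=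
  - Num.min (expect (prob M) (pay_g pi Pi gi Gi)
             - expect (prob M) (cost_g i gi Gi)) 0.
Definition uplift_d (pi : R) (Pi : Om -> R) (j : Ds) (dj : R) (Dj : Om -> R) : R :=
  - Num.min (expect (prob M) (pay_d pi Pi dj Dj)
             - expect (prob M) (cost_d j dj Dj)) 0.

End Market.

(** Call a participant's expected cost minus its expected payment its loss.
    Once the balance terms are expanded, the partial Lagrangian is exactly
    the sum of all participants' losses.  Setting a single
    participant's day-ahead and real-time quantities to zero keeps the bound
    constraints and makes its loss zero while leaving all other losses
    unchanged, so minimality of the Lagrangian forces every loss to be
    nonpositive: each participant is paid at least its expected cost, and
    no uplift is needed. *)
From mathcomp Require Import all_boot all_order all_algebra.
From mathcomp Require Import ring lra.
Set Implicit Arguments. Unset Strict Implicit. Unset Printing Implicit Defensive.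
Import Order.TTheory GRing.Theory Num.Theory.
Local Open Scope ring_scope.

Section Expectation.
Variables (R : realFieldType) (Om : finType) (p : Om -> R).

Lemma eq_expect (f h : Om -> R) : f =1 h -> expect p f = expect p h.
Proof. by move=> fh; apply: eq_bigr => w _; rewrite fh. Qed.

Lemma expect_eq0 (Y : Om -> R) : (forall w, Y w = 0) -> expect p Y = 0.
Proof. by move=> Y0; rewrite /expect big1 // => w _; rewrite Y0 mulr0. Qed.

Lemma expectD (f h : Om -> R) :
  expect p (fun w => f w + h w) = expect p f + expect p h.
Proof. by rewrite /expect -big_split; apply: eq_bigr => w _; rewrite mulrDr. Qed.

Lemma expect_sum (I : finType) (Y : I -> Om -> R) :
  expect p (fun w => \sum_i Y i w) = \sum_i expect p (Y i).
Proof.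
by rewrite /expect [RHS]exchange_big; apply: eq_bigr => w _; rewrite mulr_sumr.
Qed.

Lemma expect_cst (c : R) : \sum_w p w = 1 -> expect p (fun _ => c) = c.
Proof. by move=> p1; rewrite /expect -mulr_suml p1 mul1r. Qed.

End Expectation.

Lemma term_le0_of_sum_le (R : numDomainType) (I : finType) (F F' : I -> R) (i : I) :
  (forall k, k != i -> F' k = F k) -> F' i = 0 ->
  \sum_k F k <= \sum_k F' k -> F i <= 0.
Proof.
move=> F'F F'i0; rewrite (bigD1 i) // [leRHS](bigD1 i) //= F'i0 add0r.
by rewrite [leRHS](eq_bigr _ F'F) gerDr.
Qed.

Section Market.
Variables (R : realFieldType) (Gs Ds Om : finType) (M : market R Gs Ds Om).
Variables (pi : R) (Pi : Om -> R).

Definition loss_g (i : Gs) (gi : R) (Gi : Om -> R) : R :=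
  expect (prob M) (cost_g M i gi Gi) - expect (prob M) (pay_g pi Pi gi Gi).

Definition loss_d (j : Ds) (dj : R) (Dj : Om -> R) : R :=
  expect (prob M) (cost_d M j dj Dj) - expect (prob M) (pay_d pi Pi dj Dj).

Lemma loss_g_idle i : loss_g i 0 (fun _ => 0) = 0.
Proof.
rewrite /loss_g !expect_eq0 ?subrr // => w.
  by rewrite /pay_g subrr !mul0r addr0.
by rewrite /cost_g subrr /posp /negp oppr0 maxxx !mulr0 !addr0.
Qed.

Lemma loss_d_idle j : loss_d j 0 (fun _ => 0) = 0.
Proof.
rewrite /loss_d !expect_eq0 ?subrr // => w.
  by rewrite /pay_d subrr !mul0r oppr0 addr0.
by rewrite /cost_d subrr /posp /negp oppr0 maxxx !mulr0 oppr0 !addr0.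
Qed.

Lemma uplift_g_eq0 i gi Gi : loss_g i gi Gi <= 0 -> uplift_g M pi Pi i gi Gi = 0.
Proof. by rewrite /uplift_g -opprB -oppr_ge0 => /min_r ->; rewrite oppr0. Qed.

Lemma uplift_d_eq0 j dj Dj : loss_d j dj Dj <= 0 -> uplift_d M pi Pi j dj Dj = 0.
Proof. by rewrite /uplift_d -opprB -oppr_ge0 => /min_r ->; rewrite oppr0. Qed.

Lemma sum_payments (g : Gs -> R) (d : Ds -> R) (G : Gs -> Om -> R)
    (D : Ds -> Om -> R) w :
  \sum_i pay_g pi Pi (g i) (G i) w + \sum_j pay_d pi Pi (d j) (D j) w =
  pi * (\sum_i g i - \sum_j d j)
  + Pi w * (\sum_i (G i w - g i) - \sum_j (D j w - d j)).
Proof.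
rewrite /pay_g /pay_d !big_split /= !sumrN -!mulr_suml !big_split /= !sumrN.
by ring.
Qed.

Hypothesis prob1 : \sum_w prob M w = 1.

Lemma lagrangian_sum_loss (g : Gs -> R) (d : Ds -> R) (G : Gs -> Om -> R)
    (D : Ds -> Om -> R) :
  lagrangian M pi Pi g d G D =
  \sum_i loss_g i (g i) (G i) + \sum_j loss_d j (d j) (D j).
Proof.
have Epay : \sum_i expect (prob M) (pay_g pi Pi (g i) (G i))
          + \sum_j expect (prob M) (pay_d pi Pi (d j) (D j)) =
    pi * (\sum_i g i - \sum_j d j)
    + expect (prob M) (fun w => Pi w *
        (\sum_i (G i w - g i) - \sum_j (D j w - d j))).
  rewrite -!expect_sum -expectD (eq_expect _ (sum_payments g d G D)).
  by rewrite expectD expect_cst.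
rewrite /lagrangian /objective /loss_g /loss_d !sumrB.
move: Epay; lra.
Qed.

Variables (g : Gs -> R) (d : Ds -> R) (G : Gs -> Om -> R) (D : Ds -> Om -> R).
Hypothesis Gbar_ge0 : forall i w, 0 <= Gbar M i w.
Hypothesis Dbar_ge0 : forall j w, 0 <= Dbar M j w.
Hypothesis bounds_GD : bounds_ok M G D.
Hypothesis lagrangian_min : forall g' d' G' D', bounds_ok M G' D' ->
  lagrangian M pi Pi g d G D <= lagrangian M pi Pi g' d' G' D'.

Lemma supplier_loss_le0 i : loss_g i (g i) (G i) <= 0.
Proof.
pose g' k := if k == i then 0 else g k.
pose G' k w := if k == i then 0 else G k w.
have bounds_G'D : bounds_ok M G' D.
  split=> [k w|]; last exact: bounds_GD.2.
  by rewrite /G'; case: eqP => _; [rewrite lexx Gbar_ge0 | exact: bounds_GD.1].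
have := lagrangian_min g' d bounds_G'D; rewrite !lagrangian_sum_loss lerD2r.
apply: term_le0_of_sum_le => [k /negbTE ki|].
  by rewrite /g' /G' ki.
by rewrite /g' /G' eqxx loss_g_idle.
Qed.

Lemma consumer_loss_le0 j : loss_d j (d j) (D j) <= 0.
Proof.
pose d' k := if k == j then 0 else d k.
pose D' k w := if k == j then 0 else D k w.
have bounds_GD' : bounds_ok M G D'.
  split=> [|k w]; first exact: bounds_GD.1.
  by rewrite /D'; case: eqP => _; [rewrite lexx Dbar_ge0 | exact: bounds_GD.2].
have := lagrangian_min g d' bounds_GD'; rewrite !lagrangian_sum_loss lerD2l.
apply: term_le0_of_sum_le => [k /negbTE kj|].
  by rewrite /d' /D' kj.
by rewrite /d' /D' eqxx loss_d_idle.
Qed.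

End Market.

Theorem theorem5 (R : realFieldType) (Gs Ds Om : finType)
  (M : market R Gs Ds Om)
  (hGs : (0 < #|Gs|)%N) (hDs : (0 < #|Ds|)%N) (hOm : (0 < #|Om|)%N)
  (hp : forall w, 0 < prob M w) (hp1 : \sum_(w : Om) prob M w = 1)
  (hag : forall i, 0 <= alpha_g M i) (had : forall j, 0 <= alpha_d M j)
  (hgp : forall i, 0 < dalpha_gp M i) (hgm : forall i, 0 < dalpha_gm M i)
  (hdp : forall j, 0 < dalpha_dp M j) (hdm : forall j, 0 < dalpha_dm M j)
  (hGbar : forall i w, 0 <= Gbar M i w) (hDbar : forall j w, 0 <= Dbar M j w)
  (g : Gs -> R) (d : Ds -> R) (G : Gs -> Om -> R) (D : Ds -> Om -> R)
  (pi : R) (Pi : Om -> R) :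
  optimal_with_prices M g d G D pi Pi ->
  (forall i, uplift_g M pi Pi i (g i) (G i) = 0) /\
  (forall j, uplift_d M pi Pi j (d j) (D j) = 0).
Proof.
move=> [[_ [_ bounds_GD]] [_ lagrangian_min]].
split=> [i|j].
- exact/uplift_g_eq0/(supplier_loss_le0 hp1 hGbar bounds_GD lagrangian_min).
- exact/uplift_d_eq0/(consumer_loss_le0 hp1 hDbar bounds_GD lagrangian_min).
Qed.
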